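(* Let $p\geq 2$ be an integer, $r=\lceil\log_2(p-1)\rceil$ and $N_r=\binom{\lceil r/2\rceil+1}{2}+\binom{\lfloor r/2\rfloor+1}{2}$. For every integer $0\leq q\leq p-1$ and every integer $m\geq 2N_r+2$, $$\mathrm{forb}(m,3,F(p-q,p,p,p-q))\geq \mathrm{forb}(m,3,p\cdot K_2)-qN_r.$$
   Context: An $s$-matrix has entries in $\{0,\dots,s-1\}$; simple means no repeated columns. $F\prec A$ means some submatrix of $A$ is a row/column permutation of $F$. $\mathrm{forb}(m,s,F)$ is the maximum number of columns of an $m$-rowed simple $s$-matrix $A$ with $F\not\prec A$. $F(a,b,c,d)$ is the 2-rowed $(0,1)$-matrix with $a$ columns $\binom00$, $b$ columns $\binom10$, $c$ columns $\binom01$, $d$ columns $\binom11$. $K_2$ is the $2\times4$ matrix of all $(0,1)$-columns of length 2 and $p\cdot K_2$ the concatenation of $p$ copies of it. *)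

From mathcomp Require Import all_boot all_algebra.
Set Implicit Arguments. Unset Strict Implicit. Unset Printing Implicit Defensive.

(* An m-rowed simple s-matrix is represented as its SET of columns; each column
   is a function 'I_m -> 'I_s (entries in {0,...,s-1}).  Simplicity (no repeated
   columns) is automatic, and the number of columns is #|A|. *)
Definition smat (m s : nat) := {set {ffun 'I_m -> 'I_s}}.

(* F \prec A : some submatrix of A (k distinct rows, l distinct columns) is a
   row/column permutation of F; the permutations are absorbed into the
   injective choices of rows (rho) and columns (gamma). *)
Definition config_in (k l m s : nat) (F : 'M[nat]_(k, l)) (A : smat m s) : bool :=
  [exists rho : {ffun 'I_k -> 'I_m}, exists gamma : {ffun 'I_l -> {ffun 'I_m -> 'I_s}},
    [&& injectiveb rho, injectiveb gamma, [forall j, gamma j \in A] &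
        [forall i, forall j, nat_of_ord (gamma j (rho i)) == F i j]]].

Definition forb (m s k l : nat) (F : 'M[nat]_(k, l)) : nat :=
  \max_(A : smat m s | ~~ config_in F A) #|A|.

(* F(a,b,c,d): a columns (0,0)^T, b columns (1,0)^T, c columns (0,1)^T, d columns (1,1)^T. *)
Definition Fabcd (a b c d : nat) : 'M[nat]_(2, a + b + c + d) :=
  \matrix_(i < 2, j < a + b + c + d)
    if i == 0 :> nat then ((a <= j < a + b) || (a + b + c <= j) : nat)
    else ((a + b <= j) : nat).

(* p . K_2 : p copies of the 2x4 matrix of all (0,1)-columns of length 2;
   column j has type t = j mod 4, with entries (t mod 2, t div 2). *)
Definition pK2 (p : nat) : 'M[nat]_(2, 4 * p) :=
  \matrix_(i < 2, j < 4 * p) if i == 0 :> nat then (j %% 4) %% 2 else (j %% 4) %/ 2.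

Definition ceil_log2 (n : nat) : nat := up_log 2 n.

Definition Nr (r : nat) : nat := 'C(uphalf r + 1, 2) + 'C(r./2 + 1, 2).

(* Both forbidden numbers are compared with (m+2)2^(m-1) + C(m,2)(p-1).

   Upper bound: if A avoids p.K2, every pair of rows has a 0/1 pattern shown by fewer than
   p columns of A.  Deleting the columns that show the rare pattern of some pair (fewer than
   C(m,2)(p-1) of them) leaves a set missing a 0/1 pattern on every pair of rows, and such a
   set has at most (m+2)2^(m-1) columns: split it by its entry in the last row; the columns
   blank there whose two 0/1-completions both occur are determined by their support.

   Lower bound: designate a pattern (f k l, g l) on each pair of rows k < l, and let s k
   differ from every f k l.  The columns avoiding all designated patterns number at least
   (m+2)2^(m-1), and for each pair there are 2^(#fillable rows - 2) columns showing its
   designated pattern and no other one.  Adding p-1 of those per pair, only p-1-q when the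
   designated pattern is (0,0) or (1,1), avoids F(p-q,p,p,p-q).  With a low block of
   ceil(r/2)+1 rows carrying (0,0) and a high block of floor(r/2)+1 rows carrying (1,1),
   exactly N_r pairs have a constant pattern and r+2 rows are fillable, and 2^r >= p-1. *)

From mathcomp Require Import all_boot all_algebra zify.
Set Implicit Arguments. Unset Strict Implicit. Unset Printing Implicit Defensive.

Lemma card_ord_range n lo hi : hi <= n -> #|[set t : 'I_n | lo <= t < hi]| = hi - lo.
Proof.
move=> hin; rewrite -[hi - lo]muln1 -sum_nat_const_nat (big_nat_widen _ _ _ _ _ hin).
by rewrite big_geq_mkord -sum1_card; apply: eq_bigl => t; rewrite inE andbC.
Qed.

Lemma card_ord_lt n k : k <= n -> #|[set t : 'I_n | t < k]| = k.
Proof.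
by move=> kn; rewrite -[RHS]subn0 -(card_ord_range 0 kn); apply: eq_card => t; rewrite !inE.
Qed.

Lemma exists_subset_card (T : finType) (S : {set T}) k :
  k <= #|S| -> exists2 E : {set T}, E \subset S & #|E| = k.
Proof.
case/card_geqP => s [s_uniq s_size sS]; exists [set x in s].
  by apply/subsetP => x; rewrite inE => /sS.
by rewrite cardsE (card_uniqP s_uniq).
Qed.

Lemma leq_card_bigcup (I T : finType) (P : pred I) (F : I -> {set T}) :
  #|\bigcup_(i | P i) F i| <= \sum_(i | P i) #|F i|.
Proof.
elim/big_rec2: _ => [|i B n _ IH]; first by rewrite cards0.
exact: leq_trans (leq_card_setU _ _) (leq_add (leqnn _) IH).
Qed.

Section Patterns.

Variables m s : nat.

Definition pat_at (x : {ffun 'I_m -> 'I_s}) (i j : 'I_m) (u v : nat) : bool :=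
  ((x i : nat) == u) && ((x j : nat) == v).

Definition pat_count (A : smat m s) (i j : 'I_m) (u v : nat) : nat :=
  #|[set x in A | pat_at x i j u v]|.

Lemma pat_count_swap (A : smat m s) i j u v : pat_count A i j u v = pat_count A j i v u.
Proof. by apply: eq_card => x; rewrite !inE /pat_at; congr (_ && _); apply: andbC. Qed.

Lemma config_pat_count l (F : 'M[nat]_(2, l)) (A : smat m s)
    (rho : {ffun 'I_2 -> 'I_m}) (gamma : {ffun 'I_l -> {ffun 'I_m -> 'I_s}})
    (J : {set 'I_l}) u v :
  injective gamma -> (forall j, gamma j \in A) ->
  (forall i j, (gamma j (rho i) : nat) = F i j) ->
  (forall j, j \in J -> F ord0 j = u /\ F ord_max j = v) ->
  #|J| <= pat_count A (rho ord0) (rho ord_max) u v.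
Proof.
move=> gamma_inj gammaA gammaF JF; rewrite -(card_imset J gamma_inj).
apply/subset_leq_card/subsetP => _ /imsetP [j /JF [Fu Fv] ->].
by rewrite inE gammaA /pat_at !gammaF Fu Fv !eqxx.
Qed.

Lemma config_FabcdP a b c d (A : smat m s) :
  config_in (Fabcd a b c d) A ->
  exists i j : 'I_m, i != j /\
    [/\ a <= pat_count A i j 0 0, b <= pat_count A i j 1 0,
        c <= pat_count A i j 0 1 & d <= pat_count A i j 1 1].
Proof.
case/existsP => rho /existsP [gamma /and4P [/injectiveP rho_inj /injectiveP gamma_inj]].
move=> /forallP gammaA /forallP gammaF.
have {}gammaF i j : (gamma j (rho i) : nat) = Fabcd a b c d i j.
  by apply/eqP; move/forallP: (gammaF i).
have block lo hi u v : hi <= a + b + c + d ->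
    (forall t, lo <= t < hi -> (((a <= t < a + b) || (a + b + c <= t)) : nat) = u
                               /\ ((a + b <= t) : nat) = v) ->
    hi - lo <= pat_count A (rho ord0) (rho ord_max) u v.
  move=> hin Huv; rewrite -(card_ord_range lo hin).
  by apply: config_pat_count gamma_inj gammaA gammaF _ => t; rewrite inE !mxE => /Huv.
exists (rho ord0), (rho ord_max); split; first by apply/eqP => /rho_inj.
split.
- by have := block 0 a 0 0; rewrite subn0; apply=> [|t]; lia.
- by have := block a (a + b) 1 0; rewrite addKn; apply=> [|t]; lia.
- by have := block (a + b) (a + b + c) 0 1; rewrite addKn; apply=> [|t]; lia.
- by have := block (a + b + c) (a + b + c + d) 1 1; rewrite addKn; apply=> [|t]; lia.
Qed.

End Patterns.

Lemma config_Fabcd_sym m s a b (A : smat m s) :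
  config_in (Fabcd a b b a) A ->
  exists i j : 'I_m, i < j /\
    forall u v, u < 2 -> v < 2 -> (if u == v then a else b) <= pat_count A i j u v.
Proof.
case/config_FabcdP => i [j [ij [c00 c10 c01 c11]]].
have bound u v : u < 2 -> v < 2 -> (if u == v then a else b) <= pat_count A i j u v.
  by case: u v => [|[|//]] [|[|//]].
case: (ltngtP i j) => [lt|gt|/val_inj eq]; last by rewrite eq eqxx in ij.
  by exists i, j.
exists j, i; split=> // u v u2 v2.
by rewrite pat_count_swap eq_sym; exact: bound.
Qed.

Lemma pat_counts_config_pK2 m s p (A : smat m s.+1) (i j : 'I_m) :
  i != j -> (forall u v, u < 2 -> v < 2 -> p <= pat_count A i j u v) ->
  config_in (pK2 p) A.
Proof.
move=> ij Hp.
pose S (t : nat) := enum [set x in A | pat_at x i j (t %% 4 %% 2) (t %% 4 %/ 2)].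
have S_size (t : 'I_(4 * p)) : t %/ 4 < size (S t).
  rewrite -cardE; apply: leq_trans (Hp _ _ (ltn_mod _ _) _); last by rewrite ltn_divLR ?ltn_mod.
  by rewrite ltn_divLR // (mulnC p).
pose rho : {ffun 'I_2 -> 'I_m} := [ffun k => if k == ord0 then i else j].
(* Column [t] of [pK2 p] goes to the [t %/ 4]-th column of [A] showing pattern [t %% 4]. *)
pose gamma : {ffun 'I_(4 * p) -> {ffun 'I_m -> 'I_s.+1}} :=
  [ffun t : 'I_(4 * p) => nth [ffun=> ord0] (S t) (t %/ 4)].
have gammaS t : gamma t \in S t by rewrite ffunE mem_nth.
have gamma_pat t : pat_at (gamma t) i j (t %% 4 %% 2) (t %% 4 %/ 2).
  by move: (gammaS t); rewrite mem_enum inE => /andP [].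
apply/existsP; exists rho; apply/existsP; exists gamma; apply/and4P; split.
- apply/injectiveP => k k'; rewrite !ffunE => e; apply: val_inj; move: e ij.
  by case: k k' => [[|[|//]] ?] [[|[|//]] ?] //= ->; rewrite eqxx.
- apply/injectiveP => t t' gt.
  have mod4 : t %% 4 = t' %% 4.
    move: (gamma_pat t) (gamma_pat t'); rewrite gt /pat_at.
    move=> /andP [/eqP -> /eqP ->] /andP [/eqP e1 /eqP e2].
    by rewrite (divn_eq (t %% 4) 2) (divn_eq (t' %% 4) 2) e1 e2.
  have St : S t = S t' by rewrite /S mod4.
  have t_lt : t %/ 4 < size (S t') by rewrite -St.
  move: gt; rewrite !ffunE St => /eqP; rewrite nth_uniq ?enum_uniq ?S_size // => /eqP div4.
  by apply: val_inj; rewrite /= (divn_eq t 4) (divn_eq t' 4) div4 mod4.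
- by apply/forallP => t; move: (gammaS t); rewrite mem_enum inE => /andP [].
- apply/forallP => k; apply/forallP => t; rewrite mxE [rho _]ffunE.
  move: (gamma_pat t) => /andP [/eqP e1 /eqP e2].
  by case: k => [[|[|//]] ?]; rewrite /= ?e1 ?e2.
Qed.

Lemma pK2_free_rare_pat m s p (A : smat m s.+1) (i j : 'I_m) :
  ~~ config_in (pK2 p) A -> i != j ->
  exists u v, [/\ u < 2, v < 2 & pat_count A i j u v < p].
Proof.
move=> A_free ij.
have [/existsP [u /existsP [v rare]]|] :=
  boolP [exists u : 'I_2, exists v : 'I_2, pat_count A i j u v < p].
  by exists u, v; rewrite !ltn_ord.
move/existsPn=> none; case/negP: A_free; apply: pat_counts_config_pK2 ij _ => u v u2 v2.
by move/existsPn: (none (Ordinal u2)) => /(_ (Ordinal v2)); rewrite -leqNgt.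
Qed.

Section Columns.

Variable m : nat.

Local Notation col := {ffun 'I_m -> 'I_3}.

Definition col_of (v : 'I_m -> nat) : col := [ffun t => inord (v t)].

Lemma col_ofE v t : v t <= 2 -> (col_of v t : nat) = v t.
Proof. by move=> v2; rewrite ffunE inordK. Qed.

Lemma col_le2 (x : col) t : (x t : nat) <= 2.
Proof. by rewrite -ltnS ltn_ord. Qed.

Definition set_entry (x : col) (a : 'I_m) (w : nat) : col :=
  col_of (fun t => if t == a then w else x t).

Lemma set_entryE (x : col) a w t :
  w <= 2 -> (set_entry x a w t : nat) = if t == a then w else x t.
Proof. by move=> w2; rewrite col_ofE //; case: eqP; rewrite ?col_le2. Qed.

Definition blank_from (k : nat) (x : col) : bool :=
  [forall t : 'I_m, (k <= t) ==> (x t == 2 :> nat)].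

Lemma blank_fromP k (x : col) :
  reflect (forall t : 'I_m, k <= t -> (x t : nat) = 2) (blank_from k x).
Proof.
apply: (iffP forallP) => H t; last by apply/implyP => /H ->.
by move/implyP: (H t) => H' /H' /eqP.
Qed.

Definition K2_free (G : {set col}) :=
  forall i j : 'I_m, i < j ->
    exists u v, [/\ u < 2, v < 2 & forall x, x \in G -> ~~ pat_at x i j u v].

Lemma K2_free_neq (G : {set col}) i j : K2_free G -> i != j ->
  exists u v, [/\ u < 2, v < 2 & forall x, x \in G -> ~~ pat_at x i j u v].
Proof.
move=> G_free; case: (ltngtP i j) => [lt|gt|/val_inj ->]; last by rewrite eqxx.
- by move=> _; exact: G_free.
- move=> _; have [u [v [u2 v2 miss]]] := G_free j i gt.
  by exists v, u; split=> // x /miss; rewrite /pat_at andbC.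
Qed.

Lemma K2_free_subset (G H : {set col}) : G \subset H -> K2_free H -> K2_free G.
Proof.
move=> GH H_free i j ij; have [u [v [u2 v2 miss]]] := H_free i j ij.
by exists u, v; split=> // x /(subsetP GH) /miss.
Qed.

Definition erase (a : 'I_m) (x : col) : col := set_entry x a 2.

Lemma eraseE a (x : col) t : (erase a x t : nat) = if t == a then 2 else x t.
Proof. exact: set_entryE. Qed.

Lemma erase_off a (x : col) t : t != a -> erase a x t = x t.
Proof. by move=> ta; apply: val_inj; rewrite /= eraseE (negbTE ta). Qed.

Lemma set_entry_inj a w (x y : col) :
  w <= 2 -> (x a : nat) = y a -> set_entry x a w = set_entry y a w -> x = y.
Proof.
move=> w2 xya /ffunP exy; apply/ffunP => t; apply: val_inj.
by move: (exy t) => /(congr1 val) /=; rewrite !set_entryE //; case: eqP => [->|].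
Qed.

Lemma card_by_entry (L : {set col}) (a : 'I_m) :
  #|L| = #|[set x in L | x a == 0 :> nat]| + #|[set x in L | x a == 1 :> nat]|
         + #|[set x in L | x a == 2 :> nat]|.
Proof.
rewrite -!sum1_card (partition_big (fun x : col => x a) xpredT) //=.
rewrite !big_ord_recr big_ord0 /= add0n.
by congr (_ + _ + _); apply: eq_bigl => x; rewrite inE.
Qed.

Lemma K2_free_erase a (G : {set col}) : K2_free G -> K2_free (erase a @: G).
Proof.
move=> G_free i j ij; have [u [v [u2 v2 miss]]] := G_free i j ij.
exists u, v; split=> // _ /imsetP [x xG ->]; move: (miss x xG).
rewrite /pat_at !eraseE; case: (i == a); case: (j == a) => /=;
  by rewrite ?(gtn_eqF u2) ?(gtn_eqF v2) ?andbF.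
Qed.

Definition doubled (G : {set col}) (a : 'I_m) : {set col} :=
  erase a @: [set x in G | x a == 0 :> nat] :&: erase a @: [set x in G | x a == 1 :> nat].

Lemma doubled_blank G a z : z \in doubled G a -> (z a : nat) = 2.
Proof. by case/setIP => /imsetP [x _ ->] _; rewrite eraseE eqxx. Qed.

Lemma doubled_extend G a z w : z \in doubled G a -> w < 2 ->
  exists2 x, x \in G & (x a : nat) = w /\ forall t, t != a -> x t = z t.
Proof.
case/setIP => /imsetP [x0 x0G ->] /imsetP [x1 x1G x01]; move: x0G x1G.
rewrite !inE => /andP [x0G /eqP x0a] /andP [x1G /eqP x1a].
case: w => [|[|//]] _; first by exists x0 => //; split=> // t /erase_off.
by exists x1 => //; rewrite x01; split=> // t /erase_off.
Qed.

(* Two doubled columns with the same support differ, if at all, in some row [t] where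
   one is 0 and the other 1; completing the right one in row [a] then produces the
   pattern that K2-freeness excludes on rows [t, a]. *)
Lemma doubled_supp_inj G a :
  K2_free G -> {in doubled G a &, injective (fun z : col => [set t | z t != 2 :> nat])}.
Proof.
move=> G_free z z' zD z'D /setP same_supp; apply/ffunP => t.
have [->|ta] := eqVneq t a.
  by apply: val_inj; rewrite /= (doubled_blank zD) (doubled_blank z'D).
apply/eqP; rewrite -val_eqE; apply: contraT => /= zz'.
have := same_supp t; rewrite !inE.
have [z2|z2] := eqVneq (z t : nat) 2; have [z'2|z'2] := eqVneq (z' t : nat) 2 => // _.
  by rewrite z2 z'2 eqxx in zz'.
have [u [v [u2 v2 miss]]] := K2_free_neq G_free ta.
have [w wD wu] : exists2 w, w \in doubled G a & (w t : nat) = u.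
  have [zu|zu] := eqVneq (z t : nat) u; first by exists z.
  exists z' => //; move: zz' z2 z'2 zu (col_le2 z t) (col_le2 z' t).
  by set zt := nat_of_ord (z t); set z't := nat_of_ord (z' t); lia.
have [x xG [xa xt]] := doubled_extend wD v2.
by move: (miss x xG); rewrite /pat_at xa eqxx andbT xt // => /eqP [].
Qed.

Lemma card_doubled (G : {set col}) (a : 'I_m) (S : {set 'I_m}) :
  K2_free G -> (forall x, x \in G -> forall t, t \notin S -> t != a -> (x t : nat) = 2) ->
  #|doubled G a| <= 2 ^ #|S|.
Proof.
move=> G_free GS; rewrite -card_powerset -(card_in_imset (doubled_supp_inj (a := a) G_free)).
apply/subset_leq_card/subsetP => _ /imsetP [z zD ->]; rewrite powersetE.
apply/subsetP => t; rewrite inE; apply: contraR => tS.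
have [->|ta] := eqVneq t a; first by rewrite (doubled_blank zD).
have [x xG [_ xt]] := doubled_extend zD (isT : 0 < 2).
by rewrite -xt // GS.
Qed.

Lemma K2_free_card k (G : {set col}) :
  k <= m -> K2_free G -> {subset G <= blank_from k} -> 2 * #|G| <= (k + 2) * 2 ^ k.
Proof.
elim: k G => [|k IH] G km G_free G_blank.
  have : G \subset [set col_of (fun=> 2)].
    apply/subsetP => x /G_blank /blank_fromP xb; rewrite inE.
    by apply/eqP/ffunP => t; apply: val_inj; rewrite /= col_ofE // xb.
  by move/subset_leq_card; rewrite cards1; lia.
set a : 'I_m := Ordinal km.
pose G_ w := [set x in G | x a == w :> nat].
have G_sub w : G_ w \subset G by apply/subsetP => x; rewrite inE => /andP [].
have card_erase w : #|erase a @: G_ w| = #|G_ w|.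
  apply: card_in_imset => x y; rewrite !inE => /andP [_ /eqP xa] /andP [_ /eqP ya].
  by apply: set_entry_inj; rewrite ?xa ?ya.
have above_a (t : 'I_m) : k <= t -> t != a -> k < t.
  move=> kt ta; rewrite ltn_neqAle kt andbT.
  by apply: contra ta => /eqP kt'; apply/eqP/val_inj.
have blank_after x (t : 'I_m) : x \in G -> k < t -> (x t : nat) = 2.
  by move=> /G_blank /blank_fromP; apply.
have IH2 : 2 * #|G_ 2| <= (k + 2) * 2 ^ k.
  apply: IH (ltnW km) (K2_free_subset (G_sub 2) G_free) _ => x.
  rewrite inE => /andP [xG /eqP xa].
  apply/blank_fromP => t kt; have [->|ta] := eqVneq t a; first exact: xa.
  exact/blank_after/above_a.
have IH01 : 2 * #|erase a @: G_ 0 :|: erase a @: G_ 1| <= (k + 2) * 2 ^ k.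
  rewrite -imsetU; apply: IH (ltnW km) _ _.
    by apply: K2_free_subset (K2_free_erase a G_free); rewrite imsetS // subUset !G_sub.
  move=> _ /imsetP [x /setUP [] /(subsetP (G_sub _)) xG ->]; apply/blank_fromP => t kt;
    by rewrite eraseE; case: eqP => // /eqP ta; exact/blank_after/above_a.
have overlap : #|erase a @: G_ 0 :&: erase a @: G_ 1| <= 2 ^ k.
  rewrite -[X in _ <= 2 ^ X](card_ord_lt (ltnW km)).
  apply: card_doubled G_free _ => x xG t; rewrite inE -leqNgt => kt ta.
  exact/blank_after/above_a.
have := card_by_entry G a; rewrite -/(G_ 0) -/(G_ 1) -/(G_ 2).
have := cardsUI (erase a @: G_ 0) (erase a @: G_ 1); rewrite !card_erase expnS.
lia.
Qed.

End Columns.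

Definition pairs m : {set 'I_m * 'I_m} := [set pr : 'I_m * 'I_m | pr.1 < pr.2].

Lemma pairs_neq m (pr : 'I_m * 'I_m) : pr \in pairs m -> pr.1 != pr.2.
Proof. by rewrite inE => lt; apply: contraTneq lt => ->; rewrite ltnn. Qed.

Lemma pK2_free_card m p (A : smat m 3) :
  ~~ config_in (pK2 p) A -> 2 * #|A| <= (m + 2) * 2 ^ m + 2 * (#|pairs m| * (p - 1)).
Proof.
move=> A_free.
have /fin_all_exists [rare rareP] : forall pr : 'I_m * 'I_m, exists uv : nat * nat,
    pr \in pairs m -> [/\ uv.1 < 2, uv.2 < 2 & pat_count A pr.1 pr.2 uv.1 uv.2 < p].
  move=> pr; have [/pairs_neq ne|] := boolP (pr \in pairs m); last by exists (0, 0).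
  by have [u [v uv]] := pK2_free_rare_pat A_free ne; exists (u, v).
pose Bad := \bigcup_(pr in pairs m) [set x in A | pat_at x pr.1 pr.2 (rare pr).1 (rare pr).2].
have Bad_card : #|Bad| <= #|pairs m| * (p - 1).
  rewrite -sum_nat_const; apply: leq_trans (leq_card_bigcup _ _) _.
  apply: leq_sum => pr /rareP [_ _ rare_lt].
  by rewrite -ltnS; apply: leq_trans rare_lt _; lia.
have Good_free : K2_free (A :\: Bad).
  move=> i j ij; have [|u2 v2 _] := rareP (i, j); first by rewrite inE.
  exists (rare (i, j)).1, (rare (i, j)).2; split=> // x; rewrite inE => /andP [xBad xA].
  by apply: contra xBad => pat; apply/bigcupP; exists (i, j); rewrite inE ?xA.
have Good_card := K2_free_card (leqnn m) Good_free.
have := cardsID Bad A; have := subset_leq_card (subsetIr A Bad).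
suff: 2 * #|A :\: Bad| <= (m + 2) * 2 ^ m by lia.
by apply: Good_card => x _; apply/blank_fromP => t; rewrite leqNgt ltn_ord.
Qed.

Section DesignatedPatterns.

Variables (m : nat) (f : nat -> nat -> nat) (g s : nat -> nat).
Hypotheses (f_lt2 : forall k l, f k l < 2) (g_lt2 : forall l, g l < 2).
Hypotheses (s_lt2 : forall k, s k < 2) (s_sep : forall k l, k < l -> s k != f k l).

Local Notation col := {ffun 'I_m -> 'I_3}.

Let f_le2 k l : f k l <= 2 := ltnW (f_lt2 k l).
Let g_le2 l : g l <= 2 := ltnW (g_lt2 l).
Let s_le2 k : s k <= 2 := ltnW (s_lt2 k).

Definition designated (x : col) (k l : 'I_m) : bool := (k < l) && pat_at x k l (f k l) (g l).

Lemma designatedP x k l : designated x k l ->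
  [/\ k < l, (x k : nat) = f k l & (x l : nat) = g l].
Proof. by case/and3P => kl /eqP xk /eqP xl. Qed.

Lemma designated_fst x k l : designated x k l -> (x k : nat) \notin [:: s k; 2].
Proof.
case/designatedP => kl -> _; rewrite !inE negb_or eq_sym s_sep //=.
by rewrite neq_ltn f_lt2.
Qed.

Lemma designated_snd x k l : designated x k l -> (x l : nat) = g l /\ (x l : nat) != 2.
Proof. by case/designatedP => _ _ ->; rewrite neq_ltn g_lt2. Qed.

Definition avoiders : {set col} := [set x | [forall k, forall l, ~~ designated x k l]].

Lemma avoidersP x : reflect (forall k l, ~~ designated x k l) (x \in avoiders).
Proof. by rewrite inE; apply: (iffP forallP) => H k; [exact/forallP | apply/forallP]. Qed.

Definition stamp (T : {set 'I_m}) : col := col_of (fun t => if t \in T then s t else 2).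

Lemma stampE (T : {set 'I_m}) t : (stamp T t : nat) = if t \in T then s t else 2.
Proof. by rewrite col_ofE //; case: ifP; rewrite ?s_le2. Qed.

Lemma stamp_inj_on (U : {set 'I_m}) a w : a \notin U -> w <= 2 ->
  {in powerset U &, injective (fun T => set_entry (stamp T) a w)}.
Proof.
move=> aU w2 T T'; rewrite !powersetE => TU T'U /ffunP same; apply/setP => t.
move: (same t) => /(congr1 val) /=; rewrite !set_entryE // !stampE.
have [->|_] := eqVneq t a.
  by move=> _; apply/idP/idP => [/(subsetP TU)|/(subsetP T'U)]; rewrite (negbTE aU).
by have := s_lt2 t; case: (t \in T); case: (t \in T') => //=; lia.
Qed.

Definition avoiders_from (k : nat) : {set col} := [set x in avoiders | blank_from k x].

Lemma set_entry_avoiders x (a : 'I_m) :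
  x \in avoiders_from a -> set_entry x a (1 - g a) \in avoiders_from a.+1.
Proof.
rewrite inE => /andP [/avoidersP x_avoids /blank_fromP x_blank].
have yE t : (set_entry x a (1 - g a) t : nat) = if t == a then 1 - g a else x t.
  by rewrite set_entryE // (leq_trans (leq_subr _ _)).
rewrite inE; apply/andP; split; last first.
  apply/blank_fromP => t a_t; rewrite yE ifN; first exact/x_blank/ltnW.
  by apply: contraTneq a_t => ->; rewrite ltnn.
apply/avoidersP => k l; apply/negP => des.
have [[yl _] [kl _ _]] := (designated_snd des, designatedP des).
have [la|la] := eqVneq l a; first by move: yl (g_lt2 a); rewrite yE la eqxx; lia.
have [ka|ka] := eqVneq k a.
  have [_] := designated_snd des; rewrite yE (negbTE la) x_blank ?eqxx //.
  by rewrite -ka; apply: ltnW.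
case/negP: (x_avoids k l); move: des.
by rewrite /designated /pat_at !yE (negbTE la) (negbTE ka).
Qed.

Lemma stamp_avoiders (T : {set 'I_m}) (a : 'I_m) :
  T \subset [set t : 'I_m | t < a] -> set_entry (stamp T) a (g a) \in avoiders_from a.+1.
Proof.
move=> Ta; have yE t : (set_entry (stamp T) a (g a) t : nat) =
    if t == a then g a else if t \in T then s t else 2.
  by rewrite set_entryE ?stampE ?g_le2.
have T_lt t : t \in T -> t < a by move/(subsetP Ta); rewrite inE.
rewrite inE; apply/andP; split; last first.
  apply/blank_fromP => t a_t; rewrite yE ifN; last by apply: contraTneq a_t => ->; rewrite ltnn.
  by case: ifP => // /T_lt; lia.
apply/avoidersP => k l; apply/negP => des; have [kl _ _] := designatedP des.
have k_a : k = a.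
  have := designated_fst des; rewrite yE !inE.
  by have [//|_] := eqVneq k a; case: ifP => _; rewrite eqxx ?orbT.
have [_] := designated_snd des; rewrite yE ifN; last first.
  by apply: contraTneq kl => ->; rewrite k_a ltnn.
by case: ifP => // /T_lt; rewrite -k_a; lia.
Qed.

(* An avoider blank from row [k] stays one with row [k] blank or equal to [1 - g k]; row [k]
   equal to [g k] with [s] on any subset of the earlier rows gives [2 ^ k] more. *)
Lemma avoiders_from_card k : k <= m -> (k + 2) * 2 ^ k <= 2 * #|avoiders_from k|.
Proof.
elim: k => [|k IH] km.
  have blank : stamp set0 \in avoiders_from 0.
    rewrite inE; apply/andP; split; last by apply/blank_fromP => t _; rewrite stampE inE.
    apply/avoidersP => k l; apply/negP => /designated_fst.
    by rewrite stampE inE !inE eqxx orbT.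
  suff : 0 < #|avoiders_from 0| by lia.
  by apply/card_gt0P; exists (stamp set0).
set a : 'I_m := Ordinal km; pose L_ w := [set x in avoiders_from k.+1 | x a == w :> nat].
have L_2 : avoiders_from k \subset L_ 2.
  apply/subsetP => x; rewrite !inE => /andP [-> /blank_fromP x_blank].
  rewrite x_blank //= andbT; apply/blank_fromP => t kt; exact/x_blank/ltnW.
have flip_le2 : 1 - g k <= 2 by rewrite (leq_trans (leq_subr _ _)).
have L_flip : [set set_entry x a (1 - g k) | x in avoiders_from k] \subset L_ (1 - g k).
  apply/subsetP => _ /imsetP [x x_av ->].
  by rewrite inE set_entry_avoiders //= set_entryE ?eqxx.
have L_stamp : [set set_entry (stamp T) a (g k) | T in powerset [set t : 'I_m | t < k]]
    \subset L_ (g k).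
  apply/subsetP => _ /imsetP [T T_lt ->]; rewrite powersetE in T_lt.
  by rewrite inE stamp_avoiders //= set_entryE ?eqxx.
have card_flip : #|[set set_entry x a (1 - g k) | x in avoiders_from k]| = #|avoiders_from k|.
  apply: card_in_imset => x y /(subsetP L_2) + /(subsetP L_2).
  by rewrite !inE => /andP [_ /eqP xa] /andP [_ /eqP ya]; apply: set_entry_inj; rewrite ?xa.
have card_stamp :
    #|[set set_entry (stamp T) a (g k) | T in powerset [set t : 'I_m | t < k]]| = 2 ^ k.
  rewrite card_in_imset ?card_powerset ?card_ord_lt 1?(ltnW km) //.
  by apply: stamp_inj_on; rewrite ?inE ?ltnn.
have L_01 : #|L_ (1 - g k)| + #|L_ (g k)| = #|L_ 0| + #|L_ 1|.
  by case: (g k) (g_lt2 a) => [|[|//]] _; rewrite // addnC.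
have : 2 * #|avoiders_from k| + 2 ^ k <= #|avoiders_from k.+1|.
  rewrite [X in _ <= X](card_by_entry _ a) -/(L_ 0) -/(L_ 1) -/(L_ 2) -L_01.
  rewrite addnAC mul2n -addnn.
  rewrite -{1}card_flip -card_stamp.
  by rewrite !leq_add ?subset_leq_card.
have := IH (ltnW km); rewrite expnS; lia.
Qed.

Corollary avoiders_card : (m + 2) * 2 ^ m <= 2 * #|avoiders|.
Proof.
apply: leq_trans (avoiders_from_card (leqnn m)) _.
by rewrite leq_mul2l subset_leq_card ?orbT //; apply/subsetP => x; rewrite inE => /andP [].
Qed.

Definition fillable : {set 'I_m} := [set t : 'I_m | s t != g t].

Definition designated_only (pr : 'I_m * 'I_m) : {set col} :=
  [set x | [forall k, forall l, designated x k l == ((k, l) == pr)]].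

Lemma designated_onlyP x pr :
  x \in designated_only pr -> forall k l, designated x k l = ((k, l) == pr).
Proof. by rewrite inE => /forallP only k l; apply/eqP; move/forallP: (only k). Qed.

Lemma designated_only_inj x pr pr' :
  x \in designated_only pr -> x \in designated_only pr' -> pr = pr'.
Proof.
move=> /designated_onlyP x_pr /designated_onlyP x_pr'.
by apply/eqP; rewrite [pr]surjective_pairing -x_pr' x_pr -surjective_pairing.
Qed.

Lemma designated_only_card (i j : 'I_m) :
  i < j -> 2 ^ #|fillable :\: [set i; j]| <= #|designated_only (i, j)|.
Proof.
move=> ij; set U := fillable :\: [set i; j].
have ji : j != i by apply: contraTneq ij => ->; rewrite ltnn.
have U_out t : t \in U -> [/\ t != i, t != j & s t != g t].
  by rewrite !inE negb_or => /andP [/andP [-> ->] ->].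
pose single T := set_entry (set_entry (stamp T) j (g j)) i (f i j).
have singleE T t : (single T t : nat) =
    if t == i then f i j else if t == j then g j else if t \in T then s t else 2.
  by rewrite !set_entryE ?stampE ?f_le2 ?g_le2.
have [U_i U_j] : i \notin U /\ j \notin U by rewrite !inE !eqxx orbT.
have T_out T t : T \in powerset U -> t \notin U -> t \notin T.
  by rewrite powersetE => /subsetP TU; apply: contra => /TU.
have single_inj : {in powerset U &, injective single}.
  move=> T T' TU T'U same; apply: (stamp_inj_on U_j (g_le2 j) TU T'U).
  apply: set_entry_inj same => //.
  rewrite !set_entryE ?stampE // eq_sym (negbTE ji).
  by rewrite (negbTE (T_out _ _ TU U_i)) (negbTE (T_out _ _ T'U U_i)).
rewrite -card_powerset -(card_in_imset single_inj); apply/subset_leq_card/subsetP.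
move=> _ /imsetP [T TU ->]; move: (TU); rewrite powersetE => /subsetP TsubU.
rewrite inE; apply/forallP => k; apply/forallP => l.
rewrite xpair_eqE; apply/eqP; apply/idP/idP => [des | /andP [/eqP -> /eqP ->]]; last first.
  by rewrite /designated ij /pat_at !singleE eqxx eq_sym (negbTE ji) !eqxx.
have k_ij : (k == i) || (k == j).
  have [//|ki] := eqVneq k i; have [//|kj] := eqVneq k j.
  move: (designated_fst des); rewrite singleE (negbTE ki) (negbTE kj) !inE.
  by case: (k \in T); rewrite eqxx ?orbT.
have l_ij : (l == i) || (l == j).
  have [//|li] := eqVneq l i; have [//|lj] := eqVneq l j.
  case: (designated_snd des); rewrite singleE (negbTE li) (negbTE lj).
  by case: ifP => [/TsubU /U_out [_ _ /negbTE sg] /eqP|]; rewrite ?sg ?eqxx.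
have [kl _ _] := designatedP des; move: kl.
case/orP: k_ij => /eqP ->; case/orP: l_ij => /eqP ->;
  by rewrite ?eqxx ?ltnn // ltnNge (ltnW ij).
Qed.

Lemma avoiders_extension (b : 'I_m * 'I_m -> nat) :
  (forall pr, pr \in pairs m -> b pr <= #|designated_only pr|) ->
  exists C : {set col}, #|avoiders| + \sum_(pr in pairs m) b pr <= #|C| /\
    forall pr, pr \in pairs m -> pat_count C pr.1 pr.2 (f pr.1 pr.2) (g pr.2) <= b pr.
Proof.
move=> b_le.
have /fin_all_exists [E EP] : forall pr : 'I_m * 'I_m, exists E : {set col},
    E \subset designated_only pr /\ #|E| = if pr \in pairs m then b pr else 0.
  move=> pr; case: ifP => [/b_le /exists_subset_card [E]|_]; first by exists E.
  by exists set0; rewrite sub0set cards0.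
have E_only pr x : x \in E pr -> x \in designated_only pr := subsetP (EP pr).1 x.
exists (avoiders :|: \bigcup_pr E pr); split.
  have disj : avoiders :&: \bigcup_pr E pr = set0.
    apply/setP => x; rewrite in_setI in_set0; apply/negP.
    case/andP => /avoidersP x_av /bigcupP [pr _ /E_only /designated_onlyP x_pr].
    by move: (x_av pr.1 pr.2); rewrite x_pr -surjective_pairing eqxx.
  rewrite cardsU disj cards0 subn0 leq_add2l -sum1_card partition_disjoint_bigcup /=.
    by rewrite big_mkcond; apply: leq_sum => pr _; rewrite sum1_card (EP pr).2.
  move=> pr pr' ne; rewrite -setI_eq0; apply/eqP/setP => x; rewrite !inE.
  apply/negP => /andP [/E_only x_pr /E_only x_pr'].
  by case/eqP: ne; apply: designated_only_inj x_pr x_pr'.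
move=> pr pr_pair; have lt : pr.1 < pr.2 by rewrite inE in pr_pair.
rewrite -[b pr](_ : #|E pr| = _); last by rewrite (EP pr).2 pr_pair.
apply/subset_leq_card/subsetP => x; rewrite inE => /andP [xC pat].
have des : designated x pr.1 pr.2 by rewrite /designated lt.
case/setUP: xC => [/avoidersP x_av | /bigcupP [pr' _ xE']].
  by case/negP: (x_av pr.1 pr.2).
have := designated_onlyP (E_only _ _ xE') pr.1 pr.2.
by rewrite des -surjective_pairing => /esym /eqP ->.
Qed.

End DesignatedPatterns.

Lemma card_pairs_within m (B : {set 'I_m}) :
  #|[set pr in pairs m | (pr.1 \in B) && (pr.2 \in B)]| <= 'C(#|B|, 2).
Proof.
rewrite -cards_draws.
have pair_inj : {in [set pr in pairs m | (pr.1 \in B) && (pr.2 \in B)] &,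
    injective (fun pr : 'I_m * 'I_m => [set pr.1; pr.2])}.
  move=> [i j] [i' j']; rewrite !inE /= => /andP [ij _] /andP [ij' _] /setP same.
  suff [ii' jj'] : i = i' :> nat /\ j = j' :> nat by congr pair; apply: val_inj.
  move: (same i) (same j) (same i') (same j'); rewrite !inE -!val_eqE /=; lia.
rewrite -(card_in_imset pair_inj); apply/subset_leq_card/subsetP.
move=> _ /imsetP [[i j] pr_in ->]; move: pr_in; rewrite !inE /= => /andP [ij /andP [iB jB]].
rewrite subUset !sub1set iB jB cards2 /=.
by rewrite neq_ltn ij.
Qed.

Section BlockDesign.

Variables (m al c : nat).
Hypotheses (al_c : al <= c) (c_m : c <= m).

(* Rows [k < l] get the pattern (0,0) inside the low block [0, al), (1,1) inside the high
   block [c, m), and (0,1) otherwise. *)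
Definition block_fst (k l : nat) : nat := if l < al then 0 else c <= k.
Definition block_snd (l : nat) : nat := al <= l.
Definition block_sep (k : nat) : nat := k < c.

Lemma block_fst_lt2 k l : block_fst k l < 2.
Proof. by rewrite /block_fst; case: ifP => // _; apply: leq_b1. Qed.

Lemma block_snd_lt2 l : block_snd l < 2.
Proof. exact: leq_b1. Qed.

Lemma block_sep_lt2 k : block_sep k < 2.
Proof. exact: leq_b1. Qed.

Lemma block_sep_neq k l : k < l -> block_sep k != block_fst k l.
Proof. by rewrite /block_sep /block_fst => kl; case: ifP; case: ltnP => //=; lia. Qed.

Let card_low : #|[set t : 'I_m | t < al]| = al.
Proof. by rewrite card_ord_lt // (leq_trans al_c). Qed.

Let card_high : #|[set t : 'I_m | c <= t]| = m - c.
Proof.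
by rewrite -(card_ord_range c (leqnn m)); apply: eq_card => t; rewrite !inE ltn_ord andbT.
Qed.

Lemma card_block_fillable : al + (m - c) <= #|fillable m block_snd block_sep|.
Proof.
have disj : [set t : 'I_m | t < al] :&: [set t : 'I_m | c <= t] = set0.
  by apply/setP => t; rewrite !inE; apply/negP => /andP; lia.
rewrite -card_low -card_high -cardsUI disj cards0 addn0; apply/subset_leq_card/subsetP => t.
by rewrite !inE /block_sep /block_snd => /orP []; lia.
Qed.

Lemma card_block_diagonal :
  #|[set pr in pairs m | block_fst pr.1 pr.2 == block_snd pr.2]| <= 'C(al, 2) + 'C(m - c, 2).
Proof.
rewrite -{1}card_low -card_high.
apply: leq_trans (leq_add (card_pairs_within _) (card_pairs_within _)).
apply: leq_trans (leq_card_setU _ _); apply/subset_leq_card/subsetP => pr.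
rewrite !inE /block_fst /block_snd => /andP [lt]; rewrite lt /=.
case: ifP => [l_al _|]; first by rewrite (ltn_trans lt l_al).
rewrite ltnNge => /negbFE ->; case: (leqP c pr.1) => // c_pr1 _.
by rewrite (leq_trans c_pr1 (ltnW lt)) orbT.
Qed.

Lemma forb_Fabcd_lower p q :
  0 < p -> q <= p - 1 -> p - 1 <= 2 ^ (al + (m - c) - 2) ->
  (m + 2) * 2 ^ m + 2 * (#|pairs m| * (p - 1))
    <= 2 * (forb m 3 (Fabcd (p - q) p p (p - q)) + q * ('C(al, 2) + 'C(m - c, 2))).
Proof.
move=> p_gt0 q_le p_le.
(* [F(p-q,p,p,p-q)] tolerates [p-q-1] copies of a constant pattern, [p-1] of the others. *)
pose b (pr : 'I_m * 'I_m) := p - 1 - q * (block_fst pr.1 pr.2 == block_snd pr.2).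
have b_le pr : pr \in pairs m -> b pr <= #|designated_only block_fst block_snd pr|.
  case: pr => i j; rewrite inE /= => ij.
  apply: leq_trans (designated_only_card block_fst_lt2 block_snd_lt2 block_sep_lt2
                                         block_sep_neq ij).
  apply: leq_trans (leq_subr _ _) (leq_trans p_le _); rewrite leq_pexp2l // cardsD.
  have := subset_leq_card (subsetIr (fillable m block_snd block_sep) [set i; j]).
  by have := card_block_fillable; rewrite cards2; case: (i != j); lia.
have [C [C_card C_pat]] := avoiders_extension b_le.
have C_free : ~~ config_in (Fabcd (p - q) p p (p - q)) C.
  apply/negP => /config_Fabcd_sym [i [j [ij cnt]]].
  have := cnt _ _ (block_fst_lt2 i j) (block_snd_lt2 j).
  have := C_pat (i, j); rewrite inE /b /= => /(_ ij).
  by case: eqP => _; lia.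
have C_forb : #|C| <= forb m 3 (Fabcd (p - q) p p (p - q)).
  exact: (leq_bigmax_cond (C : smat m 3) C_free).
have sum_b : #|pairs m| * (p - 1)
    <= \sum_(pr in pairs m) b pr
       + q * #|[set pr in pairs m | block_fst pr.1 pr.2 == block_snd pr.2]|.
  have -> : #|[set pr in pairs m | block_fst pr.1 pr.2 == block_snd pr.2]|
      = \sum_(pr in pairs m) (block_fst pr.1 pr.2 == block_snd pr.2).
    rewrite -sum1_card big_mkcond [RHS]big_mkcond; apply: eq_bigr => pr _.
    by rewrite inE; case: (pr \in pairs m); case: eqP.
  rewrite big_distrr -sum_nat_const -big_split; apply: leq_sum => pr _.
  by rewrite /b /=; case: eqP; lia.
have := avoiders_card m block_fst_lt2 block_snd_lt2 block_sep_lt2 block_sep_neq.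
have := leq_mul (leqnn q) card_block_diagonal.
lia.
Qed.

End BlockDesign.

Lemma leq_bin2S n : n <= 'C(n + 1, 2).
Proof. by rewrite addn1 binS bin1 leq_addl. Qed.

Theorem mainTheorem13 (p q m : nat) :
  2 <= p -> q <= p - 1 ->
  2 * Nr (ceil_log2 (p - 1)) + 2 <= m ->
  forb m 3 (pK2 p) <= forb m 3 (Fabcd (p - q) p p (p - q)) + q * Nr (ceil_log2 (p - 1)).
Proof.
move=> p_ge2 q_le m_ge; set r := ceil_log2 (p - 1) in m_ge *.
have r_halves : uphalf r + r./2 = r by rewrite uphalf_half -addnA addnn odd_double_half.
have r_le : r <= Nr r by rewrite -{1}r_halves leq_add ?leq_bin2S.
have al_c : uphalf r + 1 <= m - (r./2 + 1) by lia.
have c_m : m - (r./2 + 1) <= m := leq_subr _ _.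
have m_c : m - (m - (r./2 + 1)) = r./2 + 1 by lia.
have := forb_Fabcd_lower al_c c_m (ltnW p_ge2) q_le.
rewrite m_c (_ : _ + _ - 2 = r); last by lia.
rewrite -/(Nr r) => /(_ (up_logP (p - 1) (isT : 1 < 2))) lower.
apply/bigmax_leqP => A A_free; have := pK2_free_card A_free.
by move=> /leq_trans /(_ lower); rewrite leq_mul2l.
Qed.
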